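(* For all positive integers $p$ and $d$, $$c_\psi(p,d)=\frac{1}{(d-1)!}\sum_{i=1}^{d}s(d,i)\,J_{i-1}(p),$$ where $c_\psi(p,d)$ is the number of primitive points $x\in\mathbb{Z}^d$ with all coordinates positive and $\|x\|_1=p$.
   Context: A point of $\mathbb{Z}^d$ is primitive if its coordinates are relatively prime. $J_q$ is Jordan's totient function: $J_q(p)=p^q\prod_{n}(1-n^{-q})$, the product over the primes $n$ dividing $p$ (so $J_0(1)=1$ and $J_0(p)=0$ for $p>1$). $s(d,i)$ are the signed Stirling numbers of the first kind, given by $s(d+1,i)=-d\,s(d,i)+s(d,i-1)$, $s(i,i)=1$, $s(d,0)=0$ for $d>0$. *)

From mathcomp Require Import all_boot all_order all_algebra.
Set Implicit Arguments. Unset Strict Implicit. Unset Printing Implicit Defensive.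
Import Order.TTheory GRing.Theory Num.Theory.
Local Open Scope ring_scope.

Fixpoint stirling1 (d i : nat) : int :=
  match d, i with
  | 0%N, 0%N => 1
  | 0%N, _.+1 => 0
  | _.+1, 0%N => 0
  | d'.+1, i'.+1 => - (d'%:Z) * stirling1 d' i'.+1 + stirling1 d' i'
  end.

Definition jordan (q p : nat) : rat :=
  (p%:R) ^+ q * \prod_(n <- primes p) (1 - ((n%:R) ^+ q)^-1).

(* Points x in Z^d with all coordinates positive and ||x||_1 = p are encoded
   as functions 'I_d -> 'I_p.+1 (coordinates are in [1,p]). Primitive means
   the gcd of the coordinates is 1. *)
Definition pos_prim_points (p d : nat) : {set {ffun 'I_d -> 'I_p.+1}} :=
  [set x : {ffun 'I_d -> 'I_p.+1} |
     [&& [forall i, 0 < (x i : nat)]%N,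
         (\sum_(i < d) (x i : nat) == p)%N &
         (\big[gcdn/0%N]_(i < d) (x i : nat) == 1)%N]].

Definition c_psi (p d : nat) : nat := #|pos_prim_points p d|.

(* Points with positive coordinates and 1-norm n are the compositions of n
   into d parts; there are C(n-1, d-1) of them, which is
   (1/(d-1)!) sum_i s(d,i) n^(i-1) because sum_i s(d,i) x^i is the falling
   factorial x (x-1) ... (x-d+1).  Primitivity is then sieved out one prime r
   of p at a time: the compositions of n all of whose parts are multiples of r
   are r times the compositions of n/r, and on the right-hand side the factor
   1 - r^(1-i) turns n^(i-1) into n^(i-1) - (n/r)^(i-1).  Sieving by all the
   primes of p turns the powers of p into Jordan totients. *)

From mathcomp Require Import all_boot all_order all_algebra.
From mathcomp Require Import ring zify.
Import Order.TTheory GRing.Theory Num.Theory.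
Local Open Scope ring_scope.
Set Implicit Arguments. Unset Strict Implicit. Unset Printing Implicit Defensive.

Arguments stirling1 : simpl never.

Lemma stirling1SS d i :
  stirling1 d.+1 i.+1 = - d%:Z * stirling1 d i.+1 + stirling1 d i.
Proof. by []. Qed.

Lemma stirling1S0 d : stirling1 d.+1 0 = 0.
Proof. by []. Qed.

Lemma stirling1_small d i : (d < i)%N -> stirling1 d i = 0.
Proof.
elim: d i => [|d IH] [|i] // lt_di.
by rewrite stirling1SS !IH ?mulr0 ?addr0 //; lia.
Qed.

Lemma stirling1_sum_expr (R : comPzRingType) d (x : R) :
  \sum_(i < d.+1) (stirling1 d.+1 i.+1)%:~R * x ^+ i = \prod_(j < d) (x - j.+1%:R).
Proof.
elim: d => [|d IH]; first by rewrite big_ord1 big_ord0 mulr1.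
set T := \sum_(i < d.+1) _ * _ in IH.
have upper : \sum_(i < d.+2) (stirling1 d.+1 i.+1)%:~R * x ^+ i = T.
  by rewrite big_ord_recr /= stirling1_small // mul0r addr0.
have lower : \sum_(i < d.+2) (stirling1 d.+1 i)%:~R * x ^+ i = x * T.
  rewrite big_ord_recl stirling1S0 mul0r add0r mulr_sumr.
  by apply: eq_bigr => i _; rewrite exprS mulrCA.
rewrite [RHS]big_ord_recr /= -IH -/T.
transitivity (- d.+1%:R * T + x * T); last by ring.
rewrite -lower -upper mulr_sumr -big_split /=; apply: eq_bigr => i _.
by rewrite stirling1SS rmorphD rmorphM /= rmorphN /= mulrDl mulrA.
Qed.

Lemma natr_ffact (R : comPzRingType) n d :
  (n ^_ d)%:R = \prod_(j < d) (n%:R - j%:R) :> R.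
Proof.
case: (leqP d n) => [le_dn | lt_nd]; last first.
  by rewrite ffact_small // (bigD1 (Ordinal lt_nd)) //= subrr mul0r.
rewrite ffact_prod natr_prod; apply: eq_bigr => j _.
by rewrite natrB // ltnW // (leq_trans (ltn_ord j)).
Qed.

Lemma stirling1_sum_pred_expr (R : comPzRingType) d n : (0 < d)%N -> (0 < n)%N ->
  \sum_(1 <= i < d.+1) (stirling1 d i)%:~R * (n%:R : R) ^+ i.-1 = (n.-1 ^_ d.-1)%:R.
Proof.
case: d => // d _; case: n => // n _.
rewrite big_add1 big_mkord stirling1_sum_expr natr_ffact /=.
apply: eq_bigr => j _; rewrite -addn1 -[j.+1]addn1 !natrD.
by rewrite opprD addrACA subrr addr0.
Qed.

Definition jordan_over (L : seq nat) (q n : nat) : rat :=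
  n%:R ^+ q * \prod_(r <- L) (1 - (r%:R ^+ q)^-1).

Lemma jordan_over_cons r L q n : (0 < r)%N -> (r %| n)%N ->
  jordan_over (r :: L) q n = jordan_over L q n - jordan_over L q (n %/ r).
Proof.
move=> r_gt0 r_dvd_n; rewrite /jordan_over big_cons.
rewrite natr_div // ?unitfE ?pnatr_eq0 -?lt0n // expr_div_n.
by rewrite mulrBl mul1r mulrBr mulrA.
Qed.

Definition compositions d n : {set {ffun 'I_d -> 'I_n.+1}} :=
  [set x : {ffun 'I_d -> 'I_n.+1} |
     [forall i, 0 < (x i : nat)]%N && (\sum_(i < d) (x i : nat) == n)%N].

Lemma sum_predn (I : finType) (F : I -> nat) : (forall i, 0 < F i)%N ->
  (\sum_i (F i).-1 + #|I| = \sum_i F i)%N.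
Proof.
move=> F_gt0; rewrite -sum1_card -big_split /=.
by apply: eq_bigr => i _; rewrite addn1 prednK.
Qed.

Lemma compositions_sum_pred d n (x : {ffun 'I_d -> 'I_n.+1}) :
  x \in compositions d n -> (\sum_i (x i).-1 + d = n)%N.
Proof.
rewrite inE => /andP[/forallP x_gt0 /eqP sum_x].
by rewrite -[RHS]sum_x -(sum_predn (F := fun i => x i) x_gt0) card_ord.
Qed.

Lemma card_compositions d n : (0 < d)%N -> (0 < n)%N ->
  #|compositions d n| = 'C(n.-1, d.-1).
Proof.
case: d => // m _ n_gt0.
have [lt_n_d | le_d_n] := ltnP n m.+1.
  rewrite bin_small; last by lia.
  by apply: eq_card0 => x; apply/negbTE/negP => /compositions_sum_pred; lia.
set k := (n - m.+1)%N.
pose shift (t : m.+1.-tuple 'I_k.+1) : {ffun 'I_m.+1 -> 'I_n.+1} :=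
  [ffun i => inord (tnth t i).+1].
have shiftE t i : shift t i = (tnth t i).+1 :> nat.
  by rewrite ffunE inordK // ltnS (leq_trans (ltn_ord _)) //; lia.
have shift_inj : injective shift.
  move=> t1 t2 eq_t; apply: eq_from_tnth => i; apply: val_inj.
  have := congr1 (fun x : {ffun 'I_m.+1 -> 'I_n.+1} => x i : nat) eq_t.
  by rewrite !shiftE => -[].
suff -> : compositions m.+1 n =
    shift @: [set t : m.+1.-tuple 'I_k.+1 | \sum_(i <- t) (i : nat) == k]%N.
  by rewrite card_imset // card_ord_partitions; congr 'C(_, _); lia.
apply/setP => x; apply/idP/imsetP => [x_comp | [t]].
  have sum_x := compositions_sum_pred x_comp.
  have x_pred_lt i : ((x i).-1 < k.+1)%N by move: sum_x; rewrite (bigD1 i) //=; lia.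
  exists [tuple (Ordinal (x_pred_lt i)) | i < m.+1].
    rewrite inE big_tuple; apply/eqP.
    by under eq_bigr do rewrite tnth_mktuple /=; lia.
  apply/ffunP => i; apply: val_inj; rewrite /= shiftE tnth_mktuple /= prednK //.
  by move: x_comp; rewrite inE => /andP[/forallP].
rewrite !inE big_tuple => /eqP sum_t ->.
have shift_gt0 i : (0 < shift t i)%N by rewrite shiftE.
rewrite (introT forallP shift_gt0) /= -(sum_predn shift_gt0) card_ord.
under eq_bigr do rewrite shiftE /=.
by rewrite sum_t; apply/eqP; lia.
Qed.

Definition divides_all d n r (x : {ffun 'I_d -> 'I_n.+1}) := [forall i, r %| x i]%N.

Definition primitive_wrt d n (L : seq nat) (x : {ffun 'I_d -> 'I_n.+1}) :=
  all (fun r => ~~ divides_all r x) L.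

Definition num_primitive_wrt d L n :=
  #|[set x in compositions d n | primitive_wrt L x]|.

Section Dilation.

Variables (d m n r : nat).
Hypotheses (r_gt0 : (0 < r)%N) (rm_eq_n : (r * m = n)%N).

Definition dilate (y : {ffun 'I_d -> 'I_m.+1}) : {ffun 'I_d -> 'I_n.+1} :=
  [ffun i => inord (r * y i)].

Lemma dilateE y i : dilate y i = (r * y i)%N :> nat.
Proof.
rewrite ffunE inordK // ltnS -rm_eq_n leq_mul2l.
by rewrite -ltnS ltn_ord orbT.
Qed.

Lemma dilate_inj : injective dilate.
Proof.
move=> y1 y2 eq_y; apply/ffunP => i; apply: val_inj => /=.
have := congr1 (fun x : {ffun 'I_d -> 'I_n.+1} => x i : nat) eq_y.
by rewrite /= !dilateE => /eqP; rewrite eqn_pmul2l // => /eqP.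
Qed.

Lemma dilate_compositions y :
  (dilate y \in compositions d n) = (y \in compositions d m).
Proof.
rewrite !inE; congr (_ && _).
  by apply: eq_forallb => i; rewrite dilateE muln_gt0 r_gt0.
under eq_bigr do rewrite dilateE.
by rewrite -big_distrr /= -[X in _ == X]rm_eq_n eqn_pmul2l.
Qed.

Lemma primitive_wrt_dilate L y : prime r -> r \notin L -> all prime L ->
  primitive_wrt L (dilate y) = primitive_wrt L y.
Proof.
move=> r_prime r_notin_L L_prime; apply: eq_in_all => p p_in_L /=; congr (~~ _).
have p_prime := allP L_prime p p_in_L.
have p_neq_r : p != r by apply: contraNneq r_notin_L; move=> <-.
by apply: eq_forallb => i; rewrite dilateE Gauss_dvdr // prime_coprime // dvdn_prime2.
Qed.

End Dilation.

Lemma compositions_divides_all d n r : (0 < r)%N -> (r %| n)%N ->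
  [set x in compositions d n | divides_all r x] = dilate n r @: compositions d (n %/ r).
Proof.
move=> r_gt0 r_dvd_n; have rm_eq_n : (r * (n %/ r) = n)%N by rewrite mulnC divnK.
apply/setP => x; rewrite inE.
apply/andP/imsetP => [[x_comp /forallP x_dvd] | [y y_comp ->]].
  have y_bound i : ((x i) %/ r < (n %/ r).+1)%N by rewrite ltnS leq_div2r // -ltnS.
  pose y := [ffun i => Ordinal (y_bound i)].
  have x_eq : x = dilate n r y.
    by apply/ffunP => i; apply: val_inj; rewrite /= dilateE // ffunE /= mulnC divnK.
  by exists y; rewrite // -(dilate_compositions r_gt0 rm_eq_n) -x_eq.
split; first by rewrite dilate_compositions.
by apply/forallP => i; rewrite dilateE // dvdn_mulr.
Qed.

Lemma imset_sep (aT rT : finType) (f : aT -> rT) (A : {set aT}) (P : pred rT) :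
  [set x in f @: A | P x] = f @: [set y in A | P (f y)].
Proof.
apply/setP => x; rewrite inE; apply/andP/imsetP => [[/imsetP[y Ay ->] Pfy] | [y]].
  by exists y; rewrite // inE Ay.
by rewrite inE => /andP[Ay Pfy] ->; rewrite imset_f.
Qed.

Lemma num_primitive_wrt_cons d r L n :
  prime r -> (r %| n)%N -> r \notin L -> all prime L ->
  (num_primitive_wrt d (r :: L) n + num_primitive_wrt d L (n %/ r) =
     num_primitive_wrt d L n)%N.
Proof.
move=> r_prime r_dvd_n r_notin_L L_prime; have r_gt0 := prime_gt0 r_prime.
have rm_eq_n : (r * (n %/ r) = n)%N by rewrite mulnC divnK.
rewrite /num_primitive_wrt.
rewrite -(cardsID [set x | divides_all r x] [set x in compositions d n | primitive_wrt L x]).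
rewrite [RHS]addnC; congr (_ + _)%N.
  by apply: eq_card => x; rewrite !inE /primitive_wrt /= andbCA.
symmetry; transitivity
  #|[set x in [set x in compositions d n | divides_all r x] | primitive_wrt L x]|.
  by apply: eq_card => x; rewrite !inE andbAC.
rewrite compositions_divides_all // imset_sep card_imset; last exact: dilate_inj.
by apply: eq_card => y; rewrite !inE primitive_wrt_dilate.
Qed.

Lemma primes_divn p r n : prime r -> (r %| n)%N -> p != r ->
  p \in primes n -> p \in primes (n %/ r).
Proof.
move=> r_prime r_dvd_n p_neq_r; rewrite !mem_primes => /and3P[p_prime n_gt0 p_dvd_n].
have p_coprime_r : coprime p r by rewrite prime_coprime // dvdn_prime2.
rewrite p_prime divn_gt0 ?prime_gt0 // dvdn_leq //=.
by rewrite -(Gauss_dvdl _ p_coprime_r) divnK.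
Qed.

Lemma num_primitive_wrtE d L n :
  (0 < d)%N -> (0 < n)%N -> uniq L -> {subset L <= primes n} ->
  (num_primitive_wrt d L n)%:R =
    ((d.-1)`!%:R)^-1 * \sum_(1 <= i < d.+1) (stirling1 d i)%:~R * jordan_over L i.-1 n.
Proof.
move=> d_gt0; elim: L n => [|r L IH] n n_gt0 L_uniq L_primes.
  rewrite /num_primitive_wrt (eq_card (B := compositions d n)); last first.
    by move=> x; rewrite inE andbT.
  under eq_bigr do rewrite /jordan_over big_nil mulr1.
  rewrite card_compositions // stirling1_sum_pred_expr // -bin_ffact natrM.
  by rewrite mulrCA mulVf ?mulr1 // pnatr_eq0 -lt0n fact_gt0.
case/andP: L_uniq => r_notin_L L_uniq.
have := L_primes r (mem_head r L); rewrite mem_primes => /and3P[r_prime _ r_dvd_n].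
have L_sub_n : {subset L <= primes n}.
  by move=> p p_in_L; apply: L_primes; rewrite inE p_in_L orbT.
have L_prime : all prime L.
  by apply/allP => p /L_sub_n; rewrite mem_primes => /andP[].
have L_sub_n_r : {subset L <= primes (n %/ r)}.
  move=> p p_in_L; apply: primes_divn (L_sub_n p p_in_L) => //.
  by apply: contraNneq r_notin_L; move=> <-.
have n_r_gt0 : (0 < n %/ r)%N by rewrite divn_gt0 ?prime_gt0 // dvdn_leq.
have := num_primitive_wrt_cons d r_prime r_dvd_n r_notin_L L_prime.
move=> /(congr1 (fun k => k%:R : rat)); rewrite natrD => /(canRL (addrK _)) ->.
rewrite IH // IH // -mulrBr -sumrB; congr (_ * _); apply: eq_big_nat => i _.
by rewrite jordan_over_cons ?prime_gt0 // mulrBr.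
Qed.

Lemma divisor_eq1_primes g n : (0 < n)%N -> (g %| n)%N ->
  (g == 1)%N = all (fun p => ~~ (p %| g))%N (primes n).
Proof.
move=> n_gt0 g_dvd_n; have g_gt0 := dvdn_gt0 n_gt0 g_dvd_n.
have -> : (g == 1)%N = coprime g n by rewrite /coprime (gcdn_idPl g_dvd_n).
rewrite coprime_has_primes // -all_predC.
apply: eq_in_all => p; rewrite mem_primes => /and3P[p_prime _ _] /=.
by rewrite mem_primes p_prime g_gt0.
Qed.

Lemma pos_prim_pointsE p d : (0 < p)%N ->
  pos_prim_points p d = [set x in compositions d p | primitive_wrt (primes p) x].
Proof.
move=> p_gt0; apply/setP => x; rewrite !inE andbA.
apply: andb_id2l => /andP[_ /eqP sum_x].
have gcd_dvd_p : (\big[gcdn/0]_(i < d) (x i : nat) %| p)%N.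
  by rewrite -[p in (_ %| p)%N]sum_x; apply: dvdn_sum => i _; apply: biggcdn_inf.
rewrite (divisor_eq1_primes p_gt0 gcd_dvd_p); apply: eq_all => r /=; congr (~~ _).
by apply/dvdn_biggcdP/forallP => [r_dvd i | r_dvd i _]; apply: r_dvd.
Qed.

Theorem theorem2p4 (p d : nat) (hp : (0 < p)%N) (hd : (0 < d)%N) :
  (c_psi p d)%:R =
    ((d.-1)`!%:R)^-1 *
      \sum_(1 <= i < d.+1) (stirling1 d i)%:~R * jordan i.-1 p :> rat.
Proof.
by rewrite /c_psi pos_prim_pointsE // num_primitive_wrtE // primes_uniq.
Qed.
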